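(* For every set $X\subseteq\omega$ there is a family $(A_f)_{f\in 2^\omega}$ of infinite subsets of $\omega$ such that for all distinct $f,g\in 2^\omega$, the sets $A_f$ and $A_g$ are $X$ bi-immune.
   Context: For $X,A,B\subseteq\omega$, $A$ and $B$ are called $X$ bi-immune if for every partial $X$-computable function $h$ with infinite range there is some $a\in A$ with $h(a)$ defined and $h(a)\notin B$, and there is some $b\in B$ with $h(b)$ defined and $h(b)\notin A$. *)

From Stdlib Require Import List Arith.
Import ListNotations.

(* Sets of naturals (and elements of 2^omega) are characteristic functions. *)
Definition natset := nat -> bool.

Inductive prog : Type :=
| PZero : prog
| PSucc : prog
| PProj : nat -> prog
| POracle : prog
| PComp : prog -> progs -> prog
| PRec : prog -> prog -> prog
| PMu : prog -> prog
with progs : Type :=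
| PNil : progs
| PCons : prog -> progs -> progs.

Inductive eval (X : natset) : prog -> list nat -> nat -> Prop :=
| ev_zero : forall v, eval X PZero v 0
| ev_succ : forall v, eval X PSucc v (S (hd 0 v))
| ev_proj : forall i v, eval X (PProj i) v (nth i v 0)
| ev_oracle : forall v, eval X POracle v (if X (hd 0 v) then 1 else 0)
| ev_comp : forall f gs v ws y,
    evals X gs v ws -> eval X f ws y -> eval X (PComp f gs) v y
| ev_rec0 : forall f g v y, eval X f v y -> eval X (PRec f g) (0 :: v) y
| ev_recS : forall f g n v y z,
    eval X (PRec f g) (n :: v) y -> eval X g (n :: y :: v) z ->
    eval X (PRec f g) (S n :: v) z
| ev_mu : forall f v n,
    eval X f (n :: v) 0 ->
    (forall m, m < n -> exists k, eval X f (m :: v) (S k)) ->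
    eval X (PMu f) v n
with evals (X : natset) : progs -> list nat -> list nat -> Prop :=
| evs_nil : forall v, evals X PNil v nil
| evs_cons : forall g gs v w ws,
    eval X g v w -> evals X gs v ws -> evals X (PCons g gs) v (w :: ws).

Definition phi (X : natset) (p : prog) (a y : nat) : Prop := eval X p [a] y.

Definition infinite_range (X : natset) (p : prog) : Prop :=
  forall N, exists a y, N <= y /\ phi X p a y.

Definition infinite_set (A : natset) : Prop :=
  forall N, exists a, N <= a /\ A a = true.

Definition bi_immune (X A B : natset) : Prop :=
  forall p : prog, infinite_range X p ->
    (exists a y, A a = true /\ phi X p a y /\ B y = false) /\
    (exists b y, B b = true /\ phi X p b y /\ A y = false).

From Stdlib Require Import List Arith Lia Cantor Classical ClassicalEpsilon FunctionalExtensionality.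
Import ListNotations.

(* A requirement is a triple (p, s, u) of a program p and two
   incomparable binary strings s, u; it asks for a, y with phi X p a y, a in
   A_f for every f extending s, and y outside A_g for every g extending u.
   Distinct f, g extend incomparable initial segments, so meeting (p, s, u)
   and (p, u, s) for all p makes A_f, A_g bi-immune.  Requirements are coded
   injectively into nat (Cantor pairing), hence classically enumerable.
   The construction runs through stages with a strictly increasing bound Bd,
   all of whose values go into every A_f (so the sets are infinite), and a
   list Res of restrained numbers.  Stage n meets requirement n by a witness
   with y > Bd and a outside Res, and restrains y: earlier witnesses lie
   below Bd, later ones avoid Res, so y enters no A_g with g extending u.
   Witnesses exist because phi X p is a partial function (evaluation is
   deterministic), so an infinite range has large values off any finite set. *)

Scheme prog_mut := Induction for prog Sort Prop
with progs_mut := Induction for progs Sort Prop.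

Lemma eval_functional (X : natset) :
  forall p v y y', eval X p v y -> eval X p v y' -> y = y'.
Proof.
  apply (prog_mut (fun p => forall v y y', eval X p v y -> eval X p v y' -> y = y')
                  (fun gs => forall v ws ws', evals X gs v ws -> evals X gs v ws' -> ws = ws')).
  - intros v y y' H H'; inversion H; inversion H'; subst; auto.
  - intros v y y' H H'; inversion H; inversion H'; subst; auto.
  - intros i v y y' H H'; inversion H; inversion H'; subst; auto.
  - intros v y y' H H'; inversion H; inversion H'; subst; auto.
  - intros f IHf gs IHgs v y y' H H'; inversion H; inversion H'; subst.
    assert (ws = ws0) by eauto; subst; eauto.
  - intros f IHf g IHg [|n v] y y' H H'; [inversion H|].
    revert y y' H H'; induction n as [|n IHn]; intros y y' H H';
      inversion H; inversion H'; subst; [eauto|].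
    assert (y0 = y1) by eauto; subst; eauto.
  - (* a smaller candidate for the least zero would have a nonzero value *)
    intros f IHf v y y' H H'; inversion H; inversion H'; subst.
    destruct (lt_eq_lt_dec y y') as [[Hlt|Heq]|Hlt]; auto.
    + destruct (H7 _ Hlt) as [k Hk]; discriminate (IHf _ _ _ H1 Hk).
    + destruct (H2 _ Hlt) as [k Hk]; discriminate (IHf _ _ _ H6 Hk).
  - intros v ws ws' H H'; inversion H; inversion H'; auto.
  - intros g IHg gs IHgs v ws ws' H H'; inversion H; inversion H'; subst.
    f_equal; eauto.
Qed.

Lemma values_bounded (X : natset) (p : prog) (L : list nat) :
  exists N, forall a y, In a L -> phi X p a y -> y < N.
Proof.
  induction L as [|a L [N HN]].
  - exists 0; intros a y [].
  - destruct (classic (exists y, phi X p a y)) as [[y0 Hy0]|Hundef].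
    + exists (Nat.max N (S y0)); intros b y [<-|Hin] Hp.
      * assert (y = y0) by (eapply eval_functional; eauto); lia.
      * specialize (HN _ _ Hin Hp); lia.
    + exists N; intros b y [<-|Hin] Hp; [exfalso; eauto | eauto].
Qed.

Lemma fresh_large_value (X : natset) (p : prog) (B : nat) (L : list nat) :
  infinite_range X p -> exists a y, phi X p a y /\ B < y /\ ~ In a L.
Proof.
  intro Hinf; destruct (values_bounded X p L) as [N HN].
  destruct (Hinf (N + S B)) as [a [y [Hy Hp]]].
  exists a, y; repeat split; auto; try lia.
  intro Hin; specialize (HN _ _ Hin Hp); lia.
Qed.

Definition pair (a b : nat) : nat := Cantor.to_nat (a, b).

Lemma pair_inj a b c d : pair a b = pair c d -> a = c /\ b = d.
Proof.
  intro H; apply (f_equal Cantor.of_nat) in H; unfold pair in H.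
  rewrite !Cantor.cancel_of_to in H; inversion H; auto.
Qed.

Fixpoint code_prog (p : prog) : nat :=
  match p with
  | PZero => pair 0 0
  | PSucc => pair 1 0
  | PProj i => pair 2 i
  | POracle => pair 3 0
  | PComp f gs => pair 4 (pair (code_prog f) (code_progs gs))
  | PRec f g => pair 5 (pair (code_prog f) (code_prog g))
  | PMu f => pair 6 (code_prog f)
  end
with code_progs (gs : progs) : nat :=
  match gs with
  | PNil => pair 0 0
  | PCons g gs => pair 1 (pair (code_prog g) (code_progs gs))
  end.

Lemma code_prog_inj : forall p q, code_prog p = code_prog q -> p = q.
Proof.
  apply (prog_mut (fun p => forall q, code_prog p = code_prog q -> p = q)
                  (fun gs => forall hs, code_progs gs = code_progs hs -> gs = hs));
    [intros q H | intros q H | intros i q H | intros q H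
    | intros f IHf gs IHgs q H | intros f IHf g IHg q H | intros f IHf q H
    | intros hs H | intros g IHg gs IHgs hs H];
    (destruct q || destruct hs); simpl in H;
    apply pair_inj in H as [Htag H]; try discriminate; try reflexivity;
    try (apply pair_inj in H as [H1 H2]); f_equal; auto.
Qed.

Fixpoint code_bits (l : list bool) : nat :=
  match l with
  | [] => 0
  | b :: l => S (pair (if b then 1 else 0) (code_bits l))
  end.

Lemma code_bits_inj : forall l m, code_bits l = code_bits m -> l = m.
Proof.
  induction l as [|b l IH]; intros [|c m] H; simpl in H; try discriminate; auto.
  injection H as H; apply pair_inj in H as [Hb Hl].
  f_equal; [destruct b, c; simpl in Hb; congruence | auto].
Qed.

Definition requirement := (prog * list bool * list bool)%type.

Definition code_req (r : requirement) : nat :=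
  let '(p, s, u) := r in pair (code_prog p) (pair (code_bits s) (code_bits u)).

Lemma code_req_inj r r' : code_req r = code_req r' -> r = r'.
Proof.
  destruct r as [[p s] u], r' as [[p' s'] u']; simpl; intro H.
  apply pair_inj in H as [Hp H]; apply pair_inj in H as [Hs Hu].
  apply code_prog_inj in Hp; apply code_bits_inj in Hs; apply code_bits_inj in Hu.
  subst; reflexivity.
Qed.

(* The n-th requirement; numbers that code nothing get a harmless default. *)
Definition req (n : nat) : requirement :=
  match excluded_middle_informative (exists r, code_req r = n) with
  | left H => proj1_sig (constructive_indefinite_description _ H)
  | right _ => (PZero, [], [])
  end.

Lemma req_code r : req (code_req r) = r.
Proof.
  unfold req; destruct excluded_middle_informative as [H|H].
  - destruct constructive_indefinite_description as [r' Hr']; apply code_req_inj, Hr'.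
  - exfalso; eauto.
Qed.

Definition prefix (s : list bool) (f : natset) : Prop :=
  forall i, i < length s -> nth i s false = f i.

Definition incomp (s u : list bool) : Prop :=
  exists i, i < length s /\ i < length u /\ nth i s false <> nth i u false.

Lemma incomp_sym s u : incomp s u -> incomp u s.
Proof. intros [i [Hs [Hu Hne]]]; exists i; auto. Qed.

Lemma incomp_prefix s u g : incomp s u -> prefix s g -> prefix u g -> False.
Proof. intros [i [Hs [Hu Hne]]] Ps Pu; rewrite Ps, Pu in Hne; auto. Qed.

Definition init (f : natset) (n : nat) : list bool := map f (seq 0 n).

Lemma init_prefix f n : prefix (init f n) f.
Proof.
  intros i Hi; unfold init in *; rewrite length_map, length_seq in Hi.
  rewrite nth_indep with (d' := f 0) by (rewrite length_map, length_seq; lia).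
  rewrite map_nth, seq_nth by lia; reflexivity.
Qed.

Lemma distinct_incomp (f g : natset) :
  f <> g -> exists n, incomp (init f n) (init g n).
Proof.
  intro Hfg.
  assert (Hdiff : exists i, f i <> g i).
  { apply NNPP; intro Hn; apply Hfg, functional_extensionality; intro i.
    apply NNPP; eauto. }
  destruct Hdiff as [i Hi]; exists (S i), i.
  unfold init at 1 2; rewrite !length_map, !length_seq.
  repeat split; try lia.
  rewrite !(init_prefix _ (S i)) by (unfold init; rewrite length_map, length_seq; lia).
  exact Hi.
Qed.

Section Construction.

Variable X : natset.

Record state := mkstate { Bd : nat; Res : list nat }.

Definition witness (st : state) (n : nat) (ay : nat * nat) : Prop :=
  let '(p, s, u) := req n in
  incomp s u /\ phi X p (fst ay) (snd ay) /\ Bd st < snd ay /\ ~ In (fst ay) (Res st).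

Definition choose (st : state) (n : nat) : option (nat * nat) :=
  match excluded_middle_informative (exists ay, witness st n ay) with
  | left H => Some (proj1_sig (constructive_indefinite_description _ H))
  | right _ => None
  end.

Definition update (st : state) (c : option (nat * nat)) : state :=
  match c with
  | None => mkstate (S (Bd st)) (Res st)
  | Some (a, y) => mkstate (S (Nat.max (Bd st) (Nat.max a y))) (y :: Res st)
  end.

Fixpoint stage (n : nat) : state :=
  match n with
  | 0 => mkstate 0 []
  | S m => update (stage m) (choose (stage m) m)
  end.

Definition chosen (n : nat) : option (nat * nat) := choose (stage n) n.

Lemma chosen_witness n a y : chosen n = Some (a, y) -> witness (stage n) n (a, y).
Proof.
  unfold chosen, choose; destruct excluded_middle_informative as [H|]; [|discriminate].
  destruct constructive_indefinite_description as [ay Hay]; simpl.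
  intro E; injection E as <-; exact Hay.
Qed.

Lemma chosen_exists n : (exists ay, witness (stage n) n ay) -> exists a y, chosen n = Some (a, y).
Proof.
  intro H; unfold chosen, choose; destruct excluded_middle_informative as [Hex|]; [|tauto].
  destruct constructive_indefinite_description as [[a y] Hay]; simpl; eauto.
Qed.

Lemma Bd_step n : Bd (stage n) < Bd (stage (S n)).
Proof. simpl; fold (chosen n); destruct (chosen n) as [[a y]|]; simpl; lia. Qed.

Lemma Bd_mono m n : m <= n -> Bd (stage m) <= Bd (stage n).
Proof. induction 1 as [|k _ IH]; auto; pose proof (Bd_step k); lia. Qed.

Lemma Bd_ge n : n <= Bd (stage n).
Proof. induction n as [|n IH]; [simpl; lia|]; pose proof (Bd_step n); lia. Qed.

Lemma chosen_below_next n a y :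
  chosen n = Some (a, y) -> a < Bd (stage (S n)) /\ y < Bd (stage (S n)).
Proof. intro H; simpl; fold (chosen n); rewrite H; simpl; lia. Qed.

Lemma chosen_restrained m n a y : m < n -> chosen m = Some (a, y) -> In y (Res (stage n)).
Proof.
  induction 1 as [|k _ IH]; intro H; simpl.
  - fold (chosen m); rewrite H; simpl; auto.
  - fold (chosen k); destruct (chosen k) as [[a' y']|]; simpl; auto.
Qed.

Definition member (f : natset) (x : nat) : Prop :=
  exists n, x = Bd (stage n) \/
    exists y, chosen n = Some (x, y) /\ let '(_, s, _) := req n in prefix s f.

Definition A (f : natset) (x : nat) : bool :=
  if excluded_middle_informative (member f x) then true else false.

Lemma A_true f x : A f x = true <-> member f x.
Proof. unfold A; destruct excluded_middle_informative; split; auto; discriminate. Qed.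

Lemma A_infinite f : infinite_set (A f).
Proof. intro N; exists (Bd (stage N)); split; [apply Bd_ge | apply A_true; exists N; auto]. Qed.

Lemma restrained_out m a y g :
  chosen m = Some (a, y) -> (let '(_, _, u) := req m in prefix u g) -> ~ member g y.
Proof.
  intros Hm Pg [n [Hbd|[y' [Hn Pf]]]];
    pose proof (chosen_witness m a y Hm) as Wm; pose proof (chosen_below_next m a y Hm).
  - (* y lies strictly between Bd(m) and Bd(m+1) *)
    unfold witness in Wm; destruct (req m) as [[p s] u]; simpl in Wm.
    destruct (le_lt_dec n m) as [Hle|Hlt].
    + pose proof (Bd_mono n m Hle); lia.
    + pose proof (Bd_mono (S m) n Hlt); lia.
  - destruct (lt_eq_lt_dec n m) as [[Hlt| ->]|Hlt].
    + (* earlier witnesses are below Bd(m) < y *)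
      destruct (chosen_below_next n y y' Hn).
      pose proof (Bd_mono (S n) m Hlt).
      unfold witness in Wm; destruct (req m) as [[p s] u]; simpl in Wm; lia.
    + (* same stage: g would extend both incomparable strings *)
      unfold witness in Wm; destruct (req m) as [[p s] u]; simpl in Wm.
      exact (incomp_prefix s u g (proj1 Wm) Pf Pg).
    + (* later witnesses avoid restrained numbers *)
      pose proof (chosen_witness n y y' Hn) as Wn.
      unfold witness in Wn; destruct (req n) as [[p s] u]; simpl in Wn.
      exact (proj2 (proj2 (proj2 Wn)) (chosen_restrained m n a y Hlt Hm)).
Qed.

Lemma requirement_met p s u f g :
  incomp s u -> infinite_range X p -> prefix s f -> prefix u g ->
  exists a y, A f a = true /\ phi X p a y /\ A g y = false.
Proof.
  intros Hsu Hinf Pf Pg.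
  set (n := code_req (p, s, u)).
  assert (Hreq : req n = (p, s, u)) by apply req_code.
  destruct (chosen_exists n) as [a [y Hc]].
  { destruct (fresh_large_value X p (Bd (stage n)) (Res (stage n)) Hinf) as [a [y Hay]].
    exists (a, y); unfold witness; rewrite Hreq; auto. }
  pose proof (chosen_witness n a y Hc) as W.
  unfold witness in W; rewrite Hreq in W; simpl in W.
  exists a, y; repeat split; [| tauto |].
  - apply A_true; exists n; right; exists y; rewrite Hreq; auto.
  - destruct (A g y) eqn:E; auto; apply A_true in E.
    exfalso; apply (restrained_out n a y g Hc); [rewrite Hreq; exact Pg | exact E].
Qed.

End Construction.

Theorem lemma4p2 : forall X : natset,
  exists Afam : natset -> natset,
    (forall f : natset, infinite_set (Afam f)) /\
    (forall f g : natset, f <> g -> bi_immune X (Afam f) (Afam g)).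
Proof.
  intro X; exists (A X); split; [apply A_infinite|].
  intros f g Hfg p Hinf.
  destruct (distinct_incomp f g Hfg) as [n Hinc].
  split.
  - exact (requirement_met X p _ _ f g Hinc Hinf (init_prefix f n) (init_prefix g n)).
  - exact (requirement_met X p _ _ g f (incomp_sym _ _ Hinc) Hinf
             (init_prefix g n) (init_prefix f n)).
Qed.
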